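(* Consider any $(M,N)$-VLFT code for a $K$-user DM-BC with $B_{\max}<\infty$. Then for every $n\ge0$, every $a\in\mathbb R$ and every $j\in\{1,\dots,K\}$, almost surely on the event $\{\mathcal H(W|Y_j^n)>0\}$, $$\mathbb E\Big[\big(\ln\mathcal H(W|Y_j^n)-\ln\mathcal H(W|Y_j^{n+1})\big)_a\,\Big|\,Y_j^n\Big]\le\varphi(a),\qquad \varphi(a):=\max_{1\le i\le K}(\ln T_i)_a.$$ Moreover, $\varphi(a)=0$ for all sufficiently large $a$.
   Context: A $K$-user discrete memoryless broadcast channel (DM-BC) consists of a finite input alphabet $\mathcal X$, finite output alphabets $\mathcal Y_1,\dots,\mathcal Y_K$ and a transition law $P_{Y_1,\dots,Y_K|X}$; $P_{Y_j|X}$ denotes its $j$-th marginal. Logarithms are natural. An $(M,N)$-VLFT code ($M$ a positive integer, $N>0$ real) consists of: a message $W$ uniform on $\mathcal W=\{1,\dots,M\}$; encoders $f_n:\mathcal W\times\mathcal Y_1^{n-1}\times\cdots\times\mathcal Y_K^{n-1}\to\mathcal X$, $n\ge1$, with $X_n=f_n(W,Y_1^{n-1},\dots,Y_K^{n-1})$, where given $(W,X^n,Y_1^{n-1},\dots,Y_K^{n-1})$ the tuple $(Y_{1,n},\dots,Y_{K,n})$ is distributed as $P_{Y_1,\dots,Y_K|X}(\cdot|X_n)$; decoders $g^{(j)}_n:\mathcal Y_j^n\to\mathcal W$; for each $j$ a stopping time $\tau_j$ of the filtration $\{\sigma(Y_j^n)\}_{n\ge0}$, with $\tau=\max_j\tau_j$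 satisfying $\mathbb E[\tau]\le N$. For a random vector $Z$, $\mathcal H(W|Z):=-\sum_{w\in\mathcal W}\mathbb P(W=w|Z)\ln\mathbb P(W=w|Z)$ denotes the (random) conditional entropy of $W$ given the realized $Z$. For $x,a\in\mathbb R$, $(x)_a:=x\,\mathbf 1\{x\ge a\}$. $B_j=\max_{x,x'}D(P_{Y_j|X}(\cdot|x)\|P_{Y_j|X}(\cdot|x'))$, $B_{\max}=\max_jB_j$, $T_j=\max_{x,x'\in\mathcal X,\,y\in\mathcal Y_j}\frac{P_{Y_j|X}(y|x)}{P_{Y_j|X}(y|x')}$. *)

From Stdlib Require Import Reals.
From mathcomp Require Import all_boot.
Set Implicit Arguments.
Unset Strict Implicit.
Unset Printing Implicit Defensive.
Local Open Scope R_scope.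

Definition rpos (x : R) : bool := if Rlt_dec 0 x then true else false.

Definition trunc (a x : R) : R := if Rle_dec a x then x else 0.

Section BC.
Variables (K M : nat) (X : finType) (Y : 'I_K -> finType).

(* one channel output of all K receivers: (y_1,...,y_K) *)
Definition Zout := {dffun forall j : 'I_K, Y j}.

Variable P : X -> Zout -> R.

Definition chan_ok : Prop :=
  (forall x z, (0 <= P x z)) /\
  (forall x, \big[Rplus/0]_(z : Zout) P x z = 1).

Definition marg (j : 'I_K) (x : X) (y : Y j) : R :=
  \big[Rplus/0]_(z : Zout | z j == y) P x z.

(* Kullback-Leibler divergence, None = +infinity *)
Definition KL (A : finType) (p q : A -> R) : option R :=
  if [forall y, rpos (p y) ==> rpos (q y)]
  then Some (\big[Rplus/0]_(y | rpos (p y)) (p y * ln (p y / q y)))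
  else None.

Definition Bmax_finite : Prop :=
  forall (j : 'I_K) (x x' : X), KL (marg (j:=j) x) (marg (j:=j) x') <> None.

Definition Tmax (i : 'I_K) : R :=
  \big[Rmax/0]_(x : X) \big[Rmax/0]_(x' : X) \big[Rmax/0]_(y : Y i)
     (if rpos (marg x' y) then marg x y / marg x' y else 0).

Definition phi (a : R) : R := \big[Rmax/0]_(i < K) trunc a (ln (Tmax i)).

(* encoder: enc t w h = X_{t+1} = f_{t+1}(w, outputs of all receivers at times 1..t),
   h being the list of the t past joint outputs *)
Variable enc : nat -> 'I_M -> seq Zout -> X.

Fixpoint chanprod_aux (w : 'I_M) (hist rest : seq Zout) : R :=
  match rest with
  | [::] => 1
  | z :: r => (P (enc (size hist) w hist) z * chanprod_aux w (rcons hist z) r)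
  end.

(* P(Y^n = zs | W = w) *)
Definition chanprod (w : 'I_M) (zs : seq Zout) : R := chanprod_aux w [::] zs.

(* P(W = w, Y_j^n = ys), n = size ys *)
Definition PWY (j : 'I_K) (w : 'I_M) (ys : seq (Y j)) : R :=
  \big[Rplus/0]_(zs : (size ys).-tuple Zout | map (fun z : Zout => z j) zs == ys)
     (/ INR M * chanprod w zs).

Definition PY (j : 'I_K) (ys : seq (Y j)) : R :=
  \big[Rplus/0]_(w : 'I_M) PWY w ys.

Definition post (j : 'I_K) (ys : seq (Y j)) (w : 'I_M) : R := (PWY w ys / PY ys).

(* H(W | Y_j^n = ys)  (0 ln 0 = 0 since Stdlib ln 0 = 0) *)
Definition condH (j : 'I_K) (ys : seq (Y j)) : R :=
  (- \big[Rplus/0]_(w : 'I_M) (post ys w * ln (post ys w))).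

Definition cond_exp_drop (j : 'I_K) (ys : seq (Y j)) (a : R) : R :=
  \big[Rplus/0]_(y' : Y j)
     (PY (rcons ys y') / PY ys * trunc a (ln (condH ys) - ln (condH (rcons ys y')))).

End BC.

(* Write p and q for the posteriors of W given Y_j^n = ys and given
   Y_j^{n+1} = ys y'.  By Bayes, p(w) / q(w) is the ratio of the average of
   P_j(y' | x) over the encoder inputs consistent with ys to its value at the
   input used for w, hence p <= T_j q pointwise (B_max < oo ensures that all
   the P_j(y' | x) are positive once Y_j^{n+1} = ys y' has positive
   probability).  Summing -p ln p + p <= T_j (-q ln q) + q, which is
   ln(p/q) >= 1 - q/p, gives H(p) <= T_j H(q), so the drop of ln H is at most
   ln T_j, and its truncated conditional mean is at most phi(a). *)

From Stdlib Require Import Reals Lra.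
From mathcomp Require Import all_boot.
From mathcomp Require Import Rstruct.
Local Open Scope R_scope.
Set Implicit Arguments.
Unset Strict Implicit.

Lemma ln_le x y : 0 < x -> x <= y -> ln x <= ln y.
Proof.
move=> hx /Rle_lt_or_eq_dec [hxy | ->]; last exact: Rle_refl.
exact/Rlt_le/ln_increasing.
Qed.

Lemma ln_le_sub1 x : 0 < x -> ln x <= x - 1.
Proof. by move=> hx; have := exp_ineq1_le (ln x); rewrite exp_ln //; lra. Qed.

Lemma rposP x : reflect (0 < x) (rpos x).
Proof. by rewrite /rpos; case: Rlt_dec => h; constructor. Qed.

Section RealSums.
Variables (I : finType) (S : pred I).

Lemma Rsum_le (F G : I -> R) :
  (forall i, S i -> F i <= G i) ->
  \big[Rplus/0]_(i | S i) F i <= \big[Rplus/0]_(i | S i) G i.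
Proof.
move=> h; apply: (big_ind2 (fun x y => x <= y)) => //; first lra.
by move=> *; lra.
Qed.

Lemma Rsum_ge0 (F : I -> R) :
  (forall i, S i -> 0 <= F i) -> 0 <= \big[Rplus/0]_(i | S i) F i.
Proof.
move=> h; apply: (big_ind (fun x => 0 <= x)) => //; first lra.
by move=> *; lra.
Qed.

Lemma Rsum_opp (F : I -> R) :
  \big[Rplus/0]_(i | S i) (- F i) = - \big[Rplus/0]_(i | S i) F i.
Proof. by apply: (big_rec2 (fun x y => x = - y)) => [|i x y _ ->]; lra. Qed.

End RealSums.

Lemma Rsum_term_le (I : finType) (F : I -> R) i0 :
  (forall i, 0 <= F i) -> F i0 <= \big[Rplus/0]_(i : I) F i.
Proof.
move=> h; rewrite (bigD1 i0) //=.
by have := @Rsum_ge0 _ (fun i => i != i0) F (fun i _ => h i); lra.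
Qed.

Lemma Rsum_convex_le (I : finType) (c : I -> R) (F : I -> R) b :
  (forall i, 0 <= c i) -> \big[Rplus/0]_(i : I) c i = 1 ->
  (forall i, 0 < c i -> F i <= b) ->
  \big[Rplus/0]_(i : I) (c i * F i) <= b.
Proof.
move=> hc hc1 hF.
have -> : b = \big[Rplus/0]_(i : I) (c i * b) by rewrite -big_distrl /= hc1; ring.
apply: Rsum_le => i _; case: (Rle_lt_or_eq_dec _ _ (hc i)) => [hci | <-]; last lra.
by apply: Rmult_le_compat_l; [exact: hc | exact: hF].
Qed.

(* Cross-multiplied form of "the weighted mean of g at w is at least 1/T times
   the weighted mean of g over all w". *)
Lemma Rsum_mean_ratio_le (I J : finType) (S : pred J) (c g : I -> J -> R) T w :
  (forall i t, 0 <= c i t) -> (forall i t i' t', g i' t' <= T * g i t) ->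
  (\big[Rplus/0]_(t | S t) c w t) *
    (\big[Rplus/0]_(i : I) \big[Rplus/0]_(t | S t) (c i t * g i t))
  <= T * (\big[Rplus/0]_(t | S t) (c w t * g w t)) *
    (\big[Rplus/0]_(i : I) \big[Rplus/0]_(t | S t) c i t).
Proof.
move=> hc hg; rewrite big_distrl [X in _ <= X * _]big_distrr /= big_distrl /=.
apply: Rsum_le => t _; rewrite !big_distrr /=.
apply: Rsum_le => i _; rewrite !big_distrr /=.
apply: Rsum_le => t' _.
have hcc : 0 <= c w t * c i t' by apply: Rmult_le_pos.
by have := Rmult_le_compat_l _ _ _ hcc (hg w t i t'); lra.
Qed.

Section RealMax.
Variables (I : finType) (F : I -> R).

Lemma Rbigmax_ge0 : 0 <= \big[Rmax/0]_(i : I) F i.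
Proof.
apply: (big_rec (fun x => 0 <= x)) => [|i x _ hx]; first lra.
exact: Rle_trans hx (Rmax_r _ _).
Qed.

Lemma Rbigmax_ub i0 : F i0 <= \big[Rmax/0]_(i : I) F i.
Proof.
have : i0 \in index_enum I by rewrite mem_index_enum.
elim: (index_enum I) => [//|k r IH].
rewrite big_cons in_cons => /orP [/eqP -> | /IH h]; first exact: Rmax_l.
exact: Rle_trans h (Rmax_r _ _).
Qed.

Lemma Rbigmax_lub c : 0 <= c -> (forall i, F i <= c) -> \big[Rmax/0]_(i : I) F i <= c.
Proof. by move=> h0 h; apply: (big_rec (fun x => x <= c)) => // i x _; exact: Rmax_lub. Qed.

End RealMax.

Definition entropy (I : finType) (p : I -> R) : R :=
  - \big[Rplus/0]_(i : I) (p i * ln (p i)).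

Lemma entropy_term_le p q T : 0 <= p -> 0 < q -> q <= 1 -> 0 <= T -> p <= T * q ->
  - (p * ln p) + p <= T * (- (q * ln q)) + q.
Proof.
move=> hp hq hq1 hT hpq.
have hlnq : ln q <= 0 by rewrite -ln_1; apply: ln_le.
case: (Rle_lt_or_eq_dec _ _ hp) => [hp0 | <-]; last by nra.
have hqp := ln_le_sub1 (Rdiv_lt_0_compat _ _ hq hp0).
have -> : ln p = ln q - ln (q / p).
  by rewrite /Rdiv ln_mult ?ln_Rinv //; [ring | exact: Rinv_0_lt_compat].
have : p * (q / p - 1) = q - p by field; lra.
nra.
Qed.

Lemma entropy_le_scale (I : finType) (p q : I -> R) T :
  (forall i, 0 <= p i) -> (forall i, 0 <= q i) ->
  \big[Rplus/0]_(i : I) p i = 1 -> \big[Rplus/0]_(i : I) q i = 1 -> 0 <= T ->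
  (forall i, p i <= T * q i) ->
  entropy p <= T * entropy q.
Proof.
move=> hp hq sp sq hT hpq.
have hterm i : - (p i * ln (p i)) + p i <= T * (- (q i * ln (q i))) + q i.
  case: (Rle_lt_or_eq_dec _ _ (hq i)) => [hqi | hqi].
    apply: entropy_term_le => //.
    by rewrite -sq; apply: Rsum_term_le.
  have hpi : p i = 0 by have := hpq i; have := hp i; rewrite -hqi; lra.
  by rewrite hpi -hqi Rmult_0_l; lra.
have : \big[Rplus/0]_(i : I) (- (p i * ln (p i)) + p i)
       <= \big[Rplus/0]_(i : I) (T * (- (q i * ln (q i))) + q i).
  by apply: Rsum_le => i _; exact: hterm.
by rewrite !big_split /= sp sq -big_distrr /= !Rsum_opp /entropy; lra.
Qed.

Lemma big_tuple_rcons (T : finType) n (V : Type) (idx : V) (op : Monoid.com_law idx)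
  (S : seq T -> bool) (F : seq T -> V) :
  \big[op/idx]_(t : n.+1.-tuple T | S t) F t =
  \big[op/idx]_(t : n.-tuple T) \big[op/idx]_(z : T | S (rcons t z)) F (rcons t z).
Proof.
rewrite pair_big_dep /=.
have hbij : bijective (fun p : n.-tuple T * T => [tuple of rcons p.1 p.2]).
  apply: inj_card_bij; last by rewrite card_prod !card_tuple expnS mulnC.
  move=> [t1 z1] [t2 z2] /(congr1 val) /= /eqP.
  by rewrite eqseq_rcons => /andP [/eqP e1 /eqP ->]; congr pair; apply: val_inj.
by rewrite (reindex _ (onW_bij _ hbij)).
Qed.

Lemma trunc_ub (a b x : R) : x <= b -> trunc a x <= Rmax 0 (trunc a b).
Proof.
rewrite /trunc => hx; do 2 case: Rle_dec => ? //.
all: try exact: Rmax_l; try (apply: Rle_trans (Rmax_r _ _)); lra.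
Qed.

Section BroadcastCode.
Variables (K M : nat) (X : finType) (Y : 'I_K -> finType).
Variables (P : X -> Zout Y -> R) (enc : nat -> 'I_M -> seq (Zout Y) -> X).
Hypotheses (hM : (0 < M)%nat) (hP : chan_ok P) (hB : Bmax_finite P).

Lemma marg_ge0 (j : 'I_K) x (y : Y j) : 0 <= marg P x y.
Proof. by apply: Rsum_ge0 => z _; apply: hP.1. Qed.

Lemma marg_sum1 (j : 'I_K) x : \big[Rplus/0]_(y : Y j) marg P x y = 1.
Proof. by rewrite -(hP.2 x) (partition_big (fun z : Zout Y => z j) xpredT). Qed.

Lemma marg_pos_all (j : 'I_K) x x' (y : Y j) : 0 < marg P x y -> 0 < marg P x' y.
Proof.
move=> hx; have := @hB j x x'; rewrite /KL.
case: ifP => [/forallP /(_ y) /implyP H _ | _ //].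
exact/rposP/H/rposP.
Qed.

Lemma marg_le_Tmax (j : 'I_K) x x' (y : Y j) : 0 < marg P x' y ->
  marg P x y <= Tmax P j * marg P x' y.
Proof.
move=> hx'.
have hratio : marg P x y / marg P x' y <= Tmax P j.
  apply: Rle_trans (Rbigmax_ub _ x); apply: Rle_trans (Rbigmax_ub _ x').
  apply: Rle_trans (Rbigmax_ub _ y).
  by rewrite (introT (rposP _) hx'); exact: Rle_refl.
have -> : marg P x y = marg P x y / marg P x' y * marg P x' y by field; lra.
by apply: Rmult_le_compat_r; lra.
Qed.

Lemma chanprod_aux_rcons w r h z :
  chanprod_aux P enc w h (rcons r z) =
  chanprod_aux P enc w h r * P (enc (size h + size r)%nat w (h ++ r)) z.
Proof.
elim: r h => [|z0 r IH] h /=; first by rewrite addn0 cats0; ring.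
by rewrite IH size_rcons cat_rcons addSnnS; ring.
Qed.

Lemma chanprod_ge0 w r : 0 <= chanprod P enc w r.
Proof.
rewrite /chanprod; elim: r [::] => [|z r IH] h /=; first lra.
by apply: Rmult_le_pos; [apply: hP.1 | apply: IH].
Qed.

Variable j : 'I_K.

Definition consistent (ys : seq (Y j)) (t : seq (Zout Y)) : bool :=
  map (fun z : Zout Y => z j) t == ys.

Lemma PWY_rcons (ys : seq (Y j)) y' w :
  PWY P enc w (rcons ys y') =
  \big[Rplus/0]_(t : (size ys).-tuple (Zout Y) | consistent ys t)
     ((/ INR M * chanprod P enc w t) * marg P (enc (size ys) w t) y').
Proof.
rewrite /PWY; move: (size_rcons ys y') => e; rewrite [in LHS]e {e}.
rewrite (big_tuple_rcons (size ys) _ (consistent (rcons ys y'))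
          (fun t => / INR M * chanprod P enc w t)).
rewrite [RHS]big_mkcond; apply: eq_bigr => t _.
under eq_bigl => z do rewrite /consistent map_rcons eqseq_rcons.
rewrite /consistent; case: ifP => _ /=; last by rewrite big_pred0.
rewrite /marg big_distrr; apply: eq_bigr => z _.
by rewrite /chanprod chanprod_aux_rcons /= size_tuple add0n Rmult_assoc.
Qed.

Lemma PWY_ge0 w (ys : seq (Y j)) : 0 <= PWY P enc w ys.
Proof.
apply: Rsum_ge0 => t _; apply: Rmult_le_pos; last exact: chanprod_ge0.
by apply/Rlt_le/Rinv_0_lt_compat/lt_0_INR/ltP.
Qed.

Lemma PY_ge0 (ys : seq (Y j)) : 0 <= PY P enc ys.
Proof. by apply: Rsum_ge0 => w _; apply: PWY_ge0. Qed.

Lemma PY_rcons_sum (ys : seq (Y j)) :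
  \big[Rplus/0]_(y' : Y j) PY P enc (rcons ys y') = PY P enc ys.
Proof.
rewrite /PY; under eq_bigr => y' _ do under eq_bigr => w _ do rewrite PWY_rcons.
rewrite exchange_big; apply: eq_bigr => w _ /=.
rewrite exchange_big; apply: eq_bigr => t _.
by rewrite -big_distrr /= marg_sum1 Rmult_1_r.
Qed.

Lemma post_ge0 (ys : seq (Y j)) w : 0 < PY P enc ys -> 0 <= post P enc ys w.
Proof.
move=> h; apply: Rmult_le_pos; first exact: PWY_ge0.
exact/Rlt_le/Rinv_0_lt_compat.
Qed.

Lemma post_sum1 (ys : seq (Y j)) : 0 < PY P enc ys ->
  \big[Rplus/0]_(w : 'I_M) post P enc ys w = 1.
Proof. by move=> h; rewrite /post /Rdiv -big_distrl /= -/(PY P enc ys); field; lra. Qed.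

Lemma marg_pos_of_PY_pos (ys : seq (Y j)) y' x :
  0 < PY P enc (rcons ys y') -> 0 < marg P x y'.
Proof.
move=> hPY; case: (Rle_lt_or_eq_dec _ _ (marg_ge0 x y')) => // hx.
have hx0 x' : marg P x' y' = 0.
  case: (Rle_lt_or_eq_dec _ _ (marg_ge0 x' y')) => // h.
  by have := marg_pos_all x h; lra.
move: hPY; rewrite /PY big1 => [|w _]; first lra.
by rewrite PWY_rcons big1 // => t _; rewrite hx0; ring.
Qed.

Lemma post_le_Tmax (ys : seq (Y j)) y' w :
  0 < PY P enc ys -> 0 < PY P enc (rcons ys y') ->
  post P enc ys w <= Tmax P j * post P enc (rcons ys y') w.
Proof.
move=> hPY hPY'.
have hcross : PWY P enc w ys * PY P enc (rcons ys y')
           <= Tmax P j * PWY P enc w (rcons ys y') * PY P enc ys.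
  rewrite /PY; under eq_bigr do rewrite PWY_rcons; rewrite PWY_rcons.
  apply: Rsum_mean_ratio_le => [i t | i t i' t'].
    apply: Rmult_le_pos; last exact: chanprod_ge0.
    by apply/Rlt_le/Rinv_0_lt_compat/lt_0_INR/ltP.
  exact/marg_le_Tmax/(marg_pos_of_PY_pos _ hPY').
rewrite /post; apply: (Rmult_le_reg_r (PY P enc ys * PY P enc (rcons ys y'))).
  exact: Rmult_lt_0_compat.
have -> : PWY P enc w ys / PY P enc ys * (PY P enc ys * PY P enc (rcons ys y'))
        = PWY P enc w ys * PY P enc (rcons ys y') by field; lra.
have -> : Tmax P j * (PWY P enc w (rcons ys y') / PY P enc (rcons ys y'))
            * (PY P enc ys * PY P enc (rcons ys y'))
        = Tmax P j * PWY P enc w (rcons ys y') * PY P enc ys by field; lra.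
exact: hcross.
Qed.

Lemma condH_le_Tmax (ys : seq (Y j)) y' :
  0 < PY P enc ys -> 0 < PY P enc (rcons ys y') ->
  condH P enc ys <= Tmax P j * condH P enc (rcons ys y').
Proof.
move=> hPY hPY'; apply: entropy_le_scale.
- by move=> w; apply: post_ge0.
- by move=> w; apply: post_ge0.
- exact: post_sum1.
- exact: post_sum1.
- exact: Rbigmax_ge0.
- by move=> w; apply: post_le_Tmax.
Qed.

Lemma condH_drop_le (ys : seq (Y j)) y' :
  0 < PY P enc ys -> 0 < condH P enc ys -> 0 < PY P enc (rcons ys y') ->
  0 < condH P enc (rcons ys y') /\
  ln (condH P enc ys) - ln (condH P enc (rcons ys y')) <= ln (Tmax P j).
Proof.
move=> hPY hH hPY'.
have hle := condH_le_Tmax hPY hPY'.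
have hT0 : 0 <= Tmax P j by apply: Rbigmax_ge0.
have hH' : 0 < condH P enc (rcons ys y') by nra.
have hT : 0 < Tmax P j by nra.
by split=> //; have := ln_le hH hle; rewrite ln_mult //; lra.
Qed.

Lemma cond_exp_drop_le_phi (ys : seq (Y j)) a :
  0 < PY P enc ys -> 0 < condH P enc ys -> cond_exp_drop P enc ys a <= phi P a.
Proof.
move=> hPY hH; apply: Rsum_convex_le => [y' | | y' hy'].
- by apply: Rmult_le_pos; [apply: PY_ge0 | apply/Rlt_le/Rinv_0_lt_compat].
- by rewrite /Rdiv -big_distrl /= PY_rcons_sum; field; lra.
have hPY' : 0 < PY P enc (rcons ys y').
  by move: hy'; rewrite /Rdiv; have := Rinv_0_lt_compat _ hPY; nra.
have [_ hdrop] := condH_drop_le hPY hH hPY'.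
apply: Rle_trans (trunc_ub a hdrop) _.
exact/Rmax_lub/(Rbigmax_ub (fun i => trunc a (ln (Tmax P i))))/Rbigmax_ge0.
Qed.

End BroadcastCode.

Lemma phi_eventually0 (K : nat) (X : finType) (Y : 'I_K -> finType) (P : X -> Zout Y -> R) :
  exists a0 : R, forall a : R, a0 <= a -> phi P a = 0.
Proof.
exists (\big[Rmax/0]_(i < K) ln (Tmax P i) + 1) => a ha.
apply: Rle_antisym; last exact: Rbigmax_ge0.
apply: Rbigmax_lub => [|i]; first lra.
have hi : ln (Tmax P i) <= \big[Rmax/0]_(i < K) ln (Tmax P i) := Rbigmax_ub _ i.
by rewrite /trunc; case: Rle_dec => ? /=; lra.
Qed.

Unset Implicit Arguments.

Theorem lemma8 (K M : nat) (X : finType) (Y : 'I_K -> finType)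
  (P : X -> Zout Y -> R) (enc : nat -> 'I_M -> seq (Zout Y) -> X) :
  (0 < K)%nat -> (0 < M)%nat ->
  chan_ok P -> Bmax_finite P ->
  (forall (j : 'I_K) (ys : seq (Y j)) (a : R),
      (R0 < PY P enc ys) -> (R0 < condH P enc ys) ->
      (forall y' : Y j, (R0 < PY P enc (rcons ys y')) ->
                        (R0 < condH P enc (rcons ys y'))) /\
      (cond_exp_drop P enc ys a <= phi P a)) /\
  (exists a0 : R, forall a : R, (a0 <= a) -> phi P a = R0).
Proof.
move=> _ hM hP hB; split; last exact: phi_eventually0.
move=> j ys a hPY hH; split.
- by move=> y' hPY'; case: (condH_drop_le hM hP hB hPY hH hPY').
- exact: cond_exp_drop_le_phi.
Qed.
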